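(* Let $x_1,\dots,x_4,y_1,\dots,y_4\in\{-1,+1\}$ with $(x_k,y_k)\neq(-1,-1)$ for all $k\in\{1,2,3,4\}$. Then $$x_1x_4+x_2x_3+y_1y_2+y_3y_4-x_1y_1-x_2y_2-x_3y_3-x_4y_4\ge 0.$$ *)

From Stdlib Require Import ZArith.
Definition pm1 (x : Z) : Prop := x = (-1)%Z \/ x = 1%Z.

(* For signs x, y the pair (-1,-1) is the only one with (1 - x)(1 - y) <> 0,
   so on the allowed pairs x y = x + y - 1.  Substituting this for the four
   products x_k y_k turns the expression into
   (1-x1)(1-x4) + (1-x2)(1-x3) + (1-y1)(1-y2) + (1-y3)(1-y4),
   a sum of products of nonnegative numbers. *)

From Stdlib Require Import ZArith Lia.
Open Scope Z_scope.

Lemma pm1_le_1 (x : Z) : pm1 x -> x <= 1.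
Proof. intros [-> | ->]; lia. Qed.

Lemma pm1_mul_not_both_neg (x y : Z) :
  pm1 x -> pm1 y -> (x, y) <> (-1, -1) -> x * y = x + y - 1.
Proof.
  intros [-> | ->] [-> | ->] hxy; try reflexivity.
  now contradiction hxy.
Qed.

Lemma mul_one_sub_nonneg (a b : Z) : a <= 1 -> b <= 1 -> 0 <= (1 - a) * (1 - b).
Proof. intros ha hb. apply Z.mul_nonneg_nonneg; lia. Qed.

Theorem lemma16 (x1 x2 x3 x4 y1 y2 y3 y4 : Z)
  (hx1 : pm1 x1) (hx2 : pm1 x2) (hx3 : pm1 x3) (hx4 : pm1 x4)
  (hy1 : pm1 y1) (hy2 : pm1 y2) (hy3 : pm1 y3) (hy4 : pm1 y4)
  (h1 : (x1, y1) <> (-1, -1)) (h2 : (x2, y2) <> (-1, -1))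
  (h3 : (x3, y3) <> (-1, -1)) (h4 : (x4, y4) <> (-1, -1)) :
  0 <= x1*x4 + x2*x3 + y1*y2 + y3*y4 - x1*y1 - x2*y2 - x3*y3 - x4*y4.
Proof.
  rewrite (pm1_mul_not_both_neg x1 y1), (pm1_mul_not_both_neg x2 y2),
    (pm1_mul_not_both_neg x3 y3), (pm1_mul_not_both_neg x4 y4) by assumption.
  replace (x1*x4 + x2*x3 + y1*y2 + y3*y4 - (x1 + y1 - 1) - (x2 + y2 - 1)
             - (x3 + y3 - 1) - (x4 + y4 - 1))
    with ((1 - x1) * (1 - x4) + (1 - x2) * (1 - x3)
          + (1 - y1) * (1 - y2) + (1 - y3) * (1 - y4)) by ring.
  repeat apply Z.add_nonneg_nonneg; apply mul_one_sub_nonneg; now apply pm1_le_1.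
Qed.
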